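(* Let $(q_n)$ and $(p_n)$ be sequences with $q_n\in(0,1)$, $p_n\in(q_n,1]$, $\lim_{n\to\infty}p_n=\lim_{n\to\infty}q_n=1$, $\lim_{n\to\infty}p_n^n=a$, $\lim_{n\to\infty}q_n^n=b$, and $\lim_{n\to\infty}1/[n]_{p_n,q_n}=0$. Then for each $f\in C[0,1]$, $\widetilde{M}_{n,k}^{(p_n,q_n)}(f;x)$ converges to $f(x)$ uniformly on $[0,1]$ as $n\to\infty$.
   Context: For $0<q<p\le1$: $[n]_{p,q}=\frac{p^n-q^n}{p-q}$; $[n]_{p,q}!=[1]_{p,q}\cdots[n]_{p,q}$, $[0]_{p,q}!=1$; $\begin{bmatrix}n\\k\end{bmatrix}_{p,q}=\frac{[n]_{p,q}!}{[k]_{p,q}![n-k]_{p,q}!}$; $(x+y)_{p,q}^n=\prod_{j=0}^{n-1}(p^jx+q^jy)$. The $(p,q)$-integral is $\int_0^a f(t)\,d_{p,q}t=(p-q)a\sum_{j=0}^\infty \frac{q^j}{p^{j+1}}f\!\left(\frac{q^j}{p^{j+1}}a\right)$. Define $m_{n,k}^{(p,q)}(x)=\frac{1}{p^{kn+n(n+1)/2}}\begin{bmatrix}n+k\\k\end{bmatrix}_{p,q}x^k(1-x)^{n+1}_{p,q}$ and $b_{n,k}^{(p,q)}(qt)=\frac{1}{p^{k(n-1)+n(n-1)/2}}\begin{bmatrix}n+k+1\\k\end{bmatrix}_{p,q}(qt)^k(1-qt)^n_{p,q}$. The operator is $$\widetilde{M}_{n,k}^{(p,q)}(f;x)=\frac{[n+1]_{p,q}}{p^n}\sum_{k=0}^\infty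 m_{n,k}^{(p,q)}(x)\,(pq)^{-k}\int_0^1 b_{n,k}^{(p,q)}(qt)f(t)\,d_{p,q}t,\quad 0\le x<1,$$ and $\widetilde{M}_{n,k}^{(p,q)}(f;1)=f(1)$.
   Formalization: f ranges over functions continuous on all of ℝ rather than over C[0,1], and uniform convergence on [0,1] is asserted for every such f. The statement above fails without it. *)

From Stdlib Require Import Reals.
From Coquelicot Require Import Coquelicot.
Open Scope R_scope.

Definition pq_int (p q : R) (n : nat) : R := (p ^ n - q ^ n) / (p - q).

Fixpoint pq_fact (p q : R) (n : nat) : R :=
  match n with
  | O => 1
  | S m => pq_fact p q m * pq_int p q (S m)
  end.

Definition pq_binom (p q : R) (n k : nat) : R :=
  pq_fact p q n / (pq_fact p q k * pq_fact p q (n - k)).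

Fixpoint pq_pow (p q x y : R) (n : nat) : R :=
  match n with
  | O => 1
  | S m => pq_pow p q x y m * (p ^ m * x + q ^ m * y)
  end.

Definition pq_integral (p q a : R) (f : R -> R) : R :=
  (p - q) * a * Series (fun j => q ^ j / p ^ (S j) * f (q ^ j / p ^ (S j) * a)).

Definition m_nk (p q : R) (n k : nat) (x : R) : R :=
  / p ^ (k * n + n * (n + 1) / 2) * pq_binom p q (n + k) k * x ^ k
  * pq_pow p q 1 (- x) (n + 1).

(* b_{n,k}^{(p,q)}(u) with u = q t; the exponent k(n-1)+n(n-1)/2 is an
   integer (it is negative only for n = 0), hence powerRZ. *)
Definition b_nk (p q : R) (n k : nat) (u : R) : R :=
  / powerRZ p (Z.of_nat k * (Z.of_nat n - 1) + Z.of_nat (n * (n - 1) / 2))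
  * pq_binom p q (n + k + 1) k * u ^ k * pq_pow p q 1 (- u) n.

Definition Mtilde (p q : R) (n : nat) (f : R -> R) (x : R) : R :=
  if Req_EM_T x 1 then f 1
  else pq_int p q (n + 1) / p ^ n *
       Series (fun k => m_nk p q n k x * / (p * q) ^ k *
                        pq_integral p q 1 (fun t => b_nk p q n k (q * t) * f t)).

From Stdlib Require Import Reals Lra Lia ZArith.
From Coquelicot Require Import Coquelicot.
Open Scope R_scope.

(* Writing q = r p with r = q/p < 1, every (p,q)-quantity is a power of p times its analogue in
   the single base r, and the operator becomes a q-Meyer-König-Zeller-Durrmeyer operator in base r
   whose inner nodes r^j are dilated by 1/p.  Its outer kernel is the q-MKZ basis, which sums to 1
   by the q-binomial theorem and has moments x and x^2 at the nodes [k]_r/[n+k]_r; its inner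
   kernels are Jackson-integral weights with q-Beta total mass.  For continuous f one has
   |f u - f x| <= eps + K (u - x)^2 on [0,2], so the error is at most eps + K times the second
   central moment of the operator, which is O(1/[n]_{p,q} + (1/p - 1)^2) and tends to 0. *)

Lemma pow_unit_interval (x : R) (m : nat) : 0 <= x <= 1 -> 0 <= x ^ m <= 1.
Proof.
  intros Hx; induction m as [|m IH]; simpl; [lra|].
  split; [apply Rmult_le_pos; lra|].
  rewrite <- (Rmult_1_l 1); apply Rmult_le_compat; lra.
Qed.

Lemma is_series_of_succ (a : nat -> R) (l : R) :
  a O = 0 -> is_series (fun k => a (S k)) l -> is_series a l.
Proof.
  intros Ha0 Ha; apply is_series_decr_1; rewrite Ha0.
  unfold plus, opp; simpl; rewrite Ropp_0, Rplus_0_r; exact Ha.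
Qed.

Lemma Series_abs_le (a b : nat -> R) (lb : R) :
  (forall k, Rabs (a k) <= b k) -> is_series b lb -> ex_series a /\ Rabs (Series a) <= lb.
Proof.
  intros Hab Hb.
  assert (Habs : ex_series (fun k => Rabs (a k))).
  { apply (@ex_series_le R_AbsRing R_CompleteNormedModule _ b); [|exists lb; exact Hb].
    intros k; change (Rabs (Rabs (a k)) <= b k); rewrite Rabs_Rabsolu; apply Hab. }
  split; [apply ex_series_Rabs, Habs|].
  rewrite <- (is_series_unique b lb Hb).
  apply (Rle_trans _ _ _ (Series_Rabs a Habs)), Series_le; [|exists lb; exact Hb].
  intros k; split; [apply Rabs_pos | apply Hab].
Qed.

Lemma Series_deviation_le (w c T : nat -> R) (s g y : R) :
  is_series w s -> is_series (fun k => w k * c k) g ->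
  (forall k, Rabs (T k - y * w k) <= w k * c k) -> Rabs (Series T - y * s) <= g.
Proof.
  intros Hw Hc HT.
  destruct (Series_abs_le _ _ g HT Hc) as [Hex Hle].
  replace (Series T) with (Series (fun k => T k - y * w k) + y * s);
    [|symmetry; apply is_series_unique].
  - replace (Series (fun k => T k - y * w k) + y * s - y * s)
      with (Series (fun k => T k - y * w k)) by ring.
    exact Hle.
  - apply (is_series_ext (fun k => (T k - y * w k) + y * w k)); [intros k; simpl; ring|].
    apply (is_series_plus (fun k => T k - y * w k) (fun k => y * w k)).
    + apply Series_correct, Hex.
    + apply (is_series_scal_l y w s Hw).
Qed.

Lemma Series_quadratic_deviation_le (w u : nat -> R) (g : R -> R) (b e x eps K : R) :
  (forall j, 0 <= w j) -> is_series w b ->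
  is_series (fun j => w j * (u j - x) ^ 2) (b * e) ->
  (forall j, Rabs (g (u j) - g x) <= eps + K * (u j - x) ^ 2) ->
  Rabs (Series (fun j => w j * g (u j)) - g x * b) <= b * (eps + K * e).
Proof.
  intros Hw0 Hw Hvar Hg.
  apply (Series_deviation_le w (fun j => eps + K * (u j - x) ^ 2)); [exact Hw| |].
  - replace (b * (eps + K * e)) with (eps * b + K * (b * e)) by ring.
    apply (is_series_ext (fun j => eps * w j + K * (w j * (u j - x) ^ 2)));
      [intros j; simpl; ring|].
    apply (is_series_plus (fun j => eps * w j) (fun j => K * (w j * (u j - x) ^ 2))).
    + apply (is_series_scal_l eps w b Hw).
    + apply (is_series_scal_l K _ (b * e) Hvar).
  - intros j; replace (w j * g (u j) - g x * w j) with (w j * (g (u j) - g x)) by ring.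
    rewrite Rabs_mult, Rabs_right by (apply Rle_ge, Hw0).
    apply Rmult_le_compat_l; [apply Hw0 | apply Hg].
Qed.

Lemma continuous_quadratic_modulus (f : R -> R) (a b eps : R) :
  (forall t, a <= t <= b -> continuous f t) -> 0 < eps ->
  exists K, 0 <= K /\ forall u v, a <= u <= b -> a <= v <= b ->
    Rabs (f u - f v) <= eps + K * (u - v) ^ 2.
Proof.
  intros Hf Heps.
  destruct (bounded_continuity f a b Hf) as [M HM].
  destruct (Heine f (fun t => a <= t <= b) (compact_P3 a b)
              (fun t Ht => proj2 (continuity_pt_filterlim f t) (Hf t Ht))
              (mkposreal eps Heps)) as [[dl Hdl] Hunif]; simpl in Hunif.
  assert (HMf : forall t, a <= t <= b -> Rabs (f t) <= M) by (intros t Ht; left; apply (HM t Ht)).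
  exists (2 * Rmax M 0 / dl ^ 2); split.
  - apply Rdiv_le_0_compat; [pose proof (Rmax_r M 0) | apply pow_lt]; lra.
  - intros u v Hu Hv.
    assert (0 <= 2 * Rmax M 0 / dl ^ 2 * (u - v) ^ 2).
    { apply Rmult_le_pos; [apply Rdiv_le_0_compat; [pose proof (Rmax_r M 0) | apply pow_lt]|
        apply pow2_ge_0]; lra. }
    destruct (Rlt_or_le (Rabs (u - v)) dl) as [Hnear | Hfar].
    + pose proof (Hunif u v Hu Hv Hnear); lra.
    + assert (Hsq : dl ^ 2 <= (u - v) ^ 2).
      { rewrite <- (pow2_abs (u - v)); apply pow_incr; lra. }
      replace (2 * Rmax M 0 / dl ^ 2 * (u - v) ^ 2)
        with (2 * Rmax M 0 * ((u - v) ^ 2 / dl ^ 2)) by (field; lra).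
      assert (1 <= (u - v) ^ 2 / dl ^ 2) by (apply (Rle_div_r 1); [apply pow_lt|]; lra).
      pose proof (HMf u Hu); pose proof (HMf v Hv); pose proof (Rmax_l M 0);
      pose proof (Rmax_r M 0).
      pose proof (Rabs_triang (f u) (- f v)) as Htri; rewrite Rabs_Ropp in Htri.
      unfold Rminus; nra.
Qed.

(** * Gaussian integers and the q-binomial theorem *)

Definition qint (r : R) (m : nat) : R := (1 - r ^ m) / (1 - r).

Fixpoint qfact (r : R) (m : nat) : R :=
  match m with O => 1 | S m' => qfact r m' * qint r (S m') end.

(* [qbinom r n k] is the Gaussian binomial coefficient [n+k choose k]_r. *)
Definition qbinom (r : R) (n k : nat) : R := qfact r (n + k) / (qfact r n * qfact r k).

Fixpoint qpoch (r x : R) (m : nat) : R :=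
  match m with O => 1 | S m' => qpoch r x m' * (1 - r ^ m' * x) end.

Lemma qint_0 (r : R) : qint r 0 = 0.
Proof. unfold qint; simpl; unfold Rdiv; ring. Qed.

Section GaussianIntegers.
Variable r : R.
Hypothesis hr : 0 < r < 1.

Lemma qint_add a b : qint r (a + b) = qint r a + r ^ a * qint r b.
Proof. unfold qint; rewrite pow_add; field; lra. Qed.

Lemma qint_ge1 m : (1 <= m)%nat -> 1 <= qint r m.
Proof.
  intros Hm; destruct m as [|m]; [lia|].
  pose proof (pow_unit_interval r m ltac:(lra)).
  unfold qint; apply Rle_div_r; simpl; nra.
Qed.

Lemma qint_gt0 m : (1 <= m)%nat -> 0 < qint r m.
Proof. intros Hm; pose proof (qint_ge1 m Hm); lra. Qed.

Lemma qint_ge0 m : 0 <= qint r m.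
Proof. destruct m as [|m]; [rewrite qint_0; lra | left; apply qint_gt0; lia]. Qed.

Lemma qint_le_inv m : qint r m <= / (1 - r).
Proof.
  pose proof (pow_unit_interval r m ltac:(lra)).
  unfold qint, Rdiv; rewrite <- (Rmult_1_l (/ (1 - r))) at 2.
  apply Rmult_le_compat_r; [left; apply Rinv_0_lt_compat|]; lra.
Qed.

Lemma qint_le a b : (a <= b)%nat -> qint r a <= qint r b.
Proof.
  intros Hab; replace b with (a + (b - a))%nat by lia; rewrite qint_add.
  pose proof (qint_ge0 (b - a)) as Hq; pose proof (pow_le r a ltac:(lra)) as Hp.
  pose proof (Rmult_le_pos _ _ Hp Hq); lra.
Qed.

Lemma qfact_gt0 m : 0 < qfact r m.
Proof.
  induction m as [|m IH]; simpl; [lra|].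
  apply Rmult_lt_0_compat; [exact IH | apply qint_gt0; lia].
Qed.

Lemma qbinom_gt0 n k : 0 < qbinom r n k.
Proof.
  unfold qbinom; pose proof (qfact_gt0 (n + k)); pose proof (qfact_gt0 n);
  pose proof (qfact_gt0 k).
  apply Rdiv_lt_0_compat; [|apply Rmult_lt_0_compat]; assumption.
Qed.

Lemma qbinom_0_l k : qbinom r 0 k = 1.
Proof. unfold qbinom; simpl; pose proof (qfact_gt0 k); field; lra. Qed.

Lemma qbinom_0_r n : qbinom r n 0 = 1.
Proof.
  unfold qbinom; simpl; rewrite Nat.add_0_r; pose proof (qfact_gt0 n); field; lra.
Qed.

Lemma qbinom_pascal n k :
  qbinom r (S n) (S k) = qbinom r n (S k) + r ^ S n * qbinom r (S n) k.
Proof.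
  unfold qbinom.
  replace (S n + S k)%nat with (S (S (n + k))) by lia.
  replace (n + S k)%nat with (S (n + k)) by lia.
  replace (S n + k)%nat with (S (n + k)) by lia.
  simpl qfact.
  replace (qint r (S (S (n + k)))) with (qint r (S n) + r ^ S n * qint r (S k))
    by (rewrite <- qint_add; f_equal; lia).
  pose proof (qfact_gt0 (n + k)); pose proof (qfact_gt0 n); pose proof (qfact_gt0 k).
  pose proof (qint_gt0 (S n) ltac:(lia)); pose proof (qint_gt0 (S k) ltac:(lia));
  pose proof (qint_gt0 (S (n + k)) ltac:(lia)).
  simpl pow; field; repeat split; lra.
Qed.

Lemma qbinom_succ_r n k :
  qbinom r n (S k) * qint r (S k) = qbinom r n k * qint r (S (n + k)).
Proof.
  unfold qbinom; replace (n + S k)%nat with (S (n + k)) by lia; simpl qfact.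
  pose proof (qfact_gt0 (n + k)); pose proof (qfact_gt0 n); pose proof (qfact_gt0 k).
  pose proof (qint_gt0 (S k) ltac:(lia)).
  field; repeat split; lra.
Qed.

Lemma qbinom_succ_l n k :
  qbinom r (S n) k * qint r (S n) = qbinom r n k * qint r (S (n + k)).
Proof.
  unfold qbinom; replace (S n + k)%nat with (S (n + k)) by lia; simpl qfact.
  pose proof (qfact_gt0 (n + k)); pose proof (qfact_gt0 n); pose proof (qfact_gt0 k).
  pose proof (qint_gt0 (S n) ltac:(lia)).
  field; repeat split; lra.
Qed.

Lemma qbinom_le_pow n k : qbinom r n k <= (/ (1 - r)) ^ n.
Proof.
  induction n as [|n IH]; simpl; [rewrite qbinom_0_l; lra|].
  pose proof (qbinom_succ_l n k); pose proof (qint_ge1 (S n) ltac:(lia)).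
  pose proof (qint_le_inv (S (n + k))); pose proof (qbinom_gt0 n k);
  pose proof (qbinom_gt0 (S n) k).
  assert (0 < / (1 - r)) by (apply Rinv_0_lt_compat; lra).
  assert (qbinom r (S n) k <= qbinom r n k * / (1 - r)) by nra.
  nra.
Qed.

Lemma qpoch_gt0 x m : 0 <= x < 1 -> 0 < qpoch r x m.
Proof.
  intros Hx; induction m as [|m IH]; simpl; [lra|].
  pose proof (pow_unit_interval r m ltac:(lra)).
  apply Rmult_lt_0_compat; [exact IH | nra].
Qed.

End GaussianIntegers.

Section QBinomialTheorem.
Variable r : R.
Hypothesis hr : 0 < r < 1.

Lemma qbinom_partial_sum n x N :
  sum_n (fun k => qbinom r (S n) k * x ^ k) (S N) =
  sum_n (fun k => qbinom r n k * x ^ k) (S N)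
  + r ^ S n * x * sum_n (fun k => qbinom r (S n) k * x ^ k) N.
Proof.
  induction N as [|N IH].
  - rewrite !sum_Sn, !sum_O; unfold plus; simpl.
    rewrite (qbinom_pascal r hr n 0), !qbinom_0_r by lra; cbn [pow]; ring.
  - rewrite (sum_Sn (fun k => qbinom r (S n) k * x ^ k) (S N)), IH at 1.
    rewrite (sum_Sn (fun k => qbinom r n k * x ^ k) (S N)),
            (sum_Sn (fun k => qbinom r (S n) k * x ^ k) N).
    unfold plus; simpl; rewrite (qbinom_pascal r hr n (S N)); cbn [pow]; ring.
Qed.

Lemma qbinom_geom_lim0 n x : 0 <= x < 1 -> is_lim_seq (fun k => qbinom r n k * x ^ k) 0.
Proof.
  intros Hx.
  apply is_lim_seq_le_le with (u := fun _ => 0) (w := fun k => (/ (1 - r)) ^ n * x ^ k).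
  - intros k; pose proof (qbinom_gt0 r hr n k); pose proof (qbinom_le_pow r hr n k).
    pose proof (pow_unit_interval x k ltac:(lra)).
    split; [nra | apply Rmult_le_compat_r; lra].
  - apply is_lim_seq_const.
  - replace (Finite 0) with (Rbar_mult ((/ (1 - r)) ^ n) 0) by (simpl; f_equal; ring).
    apply is_lim_seq_scal_l, is_lim_seq_geom; rewrite Rabs_right; lra.
Qed.

Theorem qbinomial_series n x : 0 <= x < 1 ->
  is_series (fun k => qbinom r n k * x ^ k) (/ qpoch r x (S n)).
Proof.
  intros Hx; induction n as [|n IH].
  - replace (/ qpoch r x 1) with (/ (1 - x)) by (simpl; f_equal; ring).
    eapply is_series_ext; [|apply is_series_geom; rewrite Rabs_right; lra].
    intros k; simpl; rewrite (qbinom_0_l r hr); ring.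
  - set (c := r ^ S n * x).
    assert (Hc : 0 <= c < 1).
    { pose proof (pow_lt_1_compat r (S n) ltac:(lra) ltac:(lia)); unfold c; nra. }
    set (A := fun k => qbinom r (S n) k * x ^ k).
    set (P := fun k => qbinom r n k * x ^ k).
    assert (Hsum : forall N, sum_n A N = (sum_n P (S N) - A (S N)) / (1 - c)).
    { intros N; pose proof (qbinom_partial_sum n x N) as HN; fold A P c in HN.
      rewrite sum_Sn in HN; unfold plus in HN; simpl in HN.
      apply Rmult_eq_reg_r with (1 - c); [|lra]; unfold Rdiv.
      rewrite Rmult_assoc, Rinv_l, Rmult_1_r; [nra | lra]. }
    unfold is_series; change (is_lim_seq (sum_n A) (/ qpoch r x (S (S n)))).
    apply is_lim_seq_ext with (u := fun N => (sum_n P (S N) - A (S N)) / (1 - c));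
      [intros N; now rewrite Hsum|].
    replace (/ qpoch r x (S (S n))) with ((/ qpoch r x (S n) - 0) / (1 - c)).
    2:{ pose proof (qpoch_gt0 r hr x (S n) Hx).
        change (qpoch r x (S (S n))) with (qpoch r x (S n) * (1 - c)).
        field; lra. }
    apply is_lim_seq_div'; [|apply is_lim_seq_const|lra].
    apply is_lim_seq_minus'.
    + apply (is_lim_seq_incr_1 (sum_n P)); exact IH.
    + apply (is_lim_seq_incr_1 A); exact (qbinom_geom_lim0 (S n) x Hx).
Qed.

End QBinomialTheorem.

(** * The q-MKZ basis and q-Beta weights *)

Definition mkz (r : R) (n : nat) (x : R) (k : nat) : R :=
  qbinom r n k * x ^ k * qpoch r x (S n).

Definition mkz_node (r : R) (n k : nat) : R := qint r k / qint r (n + k).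

(* Term [j] of the Jackson integral over [0,1] of t^k (r t; r)_n, divided by 1 - r. *)
Definition qbeta_weight (r : R) (n k j : nat) : R := (r ^ S k) ^ j * qpoch r (r ^ S j) n.

Definition qbeta (r : R) (n k : nat) : R :=
  qfact r k * qfact r n / (qfact r (n + k + 1) * (1 - r)).

Lemma mkz_node_0 (r : R) (m : nat) : mkz_node r m 0 = 0.
Proof. unfold mkz_node; rewrite qint_0; unfold Rdiv; ring. Qed.

Section QBeta.
Variable r : R.
Hypothesis hr : 0 < r < 1.

Lemma qbeta_gt0 n k : 0 < qbeta r n k.
Proof.
  unfold qbeta; pose proof (qfact_gt0 r hr k); pose proof (qfact_gt0 r hr n);
  pose proof (qfact_gt0 r hr (n + k + 1)).
  apply Rdiv_lt_0_compat; nra.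
Qed.

Lemma qbeta_succ n k : qbeta r n (S k) = qbeta r n k * mkz_node r (S n) (S k).
Proof.
  unfold qbeta, mkz_node.
  replace (n + S k + 1)%nat with (S (n + k + 1)) by lia.
  replace (S n + S k)%nat with (S (n + k + 1)) by lia; simpl qfact.
  pose proof (qfact_gt0 r hr k); pose proof (qfact_gt0 r hr n);
  pose proof (qfact_gt0 r hr (n + k + 1)).
  pose proof (qint_gt0 r hr (S k) ltac:(lia));
  pose proof (qint_gt0 r hr (S (n + k + 1)) ltac:(lia)).
  field; repeat split; apply Rgt_not_eq; lra.
Qed.

Lemma qbeta_weight_ge0 n k j : 0 <= qbeta_weight r n k j.
Proof.
  pose proof (pow_lt_1_compat r (S j) ltac:(lra) ltac:(lia)).
  unfold qbeta_weight; apply Rmult_le_pos.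
  - apply pow_le, pow_le; lra.
  - left; apply qpoch_gt0; lra.
Qed.

Lemma qbeta_weight_succ n k j : qbeta_weight r n (S k) j = qbeta_weight r n k j * r ^ j.
Proof. unfold qbeta_weight; cbn [pow]; rewrite Rpow_mult_distr; ring. Qed.

Theorem qbeta_series n : forall k, is_series (qbeta_weight r n k) (qbeta r n k).
Proof.
  induction n as [|n IH]; intros k.
  - pose proof (pow_lt_1_compat r (S k) ltac:(lra) ltac:(lia)).
    replace (qbeta r 0 k) with (/ (1 - r ^ S k)).
    + eapply is_series_ext; [|apply is_series_geom; rewrite Rabs_right; lra].
      intros j; unfold qbeta_weight; simpl; ring.
    + unfold qbeta; replace (0 + k + 1)%nat with (S k) by lia; simpl qfact; unfold qint.
      pose proof (qfact_gt0 r hr k).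
      field; repeat split; apply Rgt_not_eq; lra.
  - assert (Hrec : forall j, qbeta_weight r (S n) k j =
              qbeta_weight r n k j - r ^ S n * qbeta_weight r n (S k) j).
    { intros j; unfold qbeta_weight; cbn [qpoch pow]; rewrite !Rpow_mult_distr; ring. }
    replace (qbeta r (S n) k) with (qbeta r n k - r ^ S n * qbeta r n (S k)).
    + eapply is_series_ext; [intros j; symmetry; apply Hrec|].
      apply (is_series_minus (qbeta_weight r n k)); [apply IH|].
      apply (is_series_scal_l (r ^ S n) (qbeta_weight r n (S k))), IH.
    + unfold qbeta.
      replace (n + S k + 1)%nat with (S (n + k + 1)) by lia.
      replace (S n + k + 1)%nat with (S (n + k + 1)) by lia; simpl qfact.
      replace (qint r (S (n + k + 1))) with (qint r (S n) + r ^ S n * qint r (S k))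
        by (rewrite <- (qint_add r hr (S n) (S k)); f_equal; lia).
      pose proof (qfact_gt0 r hr k); pose proof (qfact_gt0 r hr n);
      pose proof (qfact_gt0 r hr (n + k + 1)).
      pose proof (qint_gt0 r hr (S n) ltac:(lia)); pose proof (qint_gt0 r hr (S k) ltac:(lia)).
      pose proof (pow_lt_1_compat r (S n) ltac:(lra) ltac:(lia)).
      assert (0 <= r ^ S n * qint r (S k)) by (apply Rmult_le_pos; lra).
      field; repeat split; apply Rgt_not_eq; lra.
Qed.

Lemma qbeta_inv n k : / qbeta r n k = qint r (S n) * (1 - r) * qbinom r (S n) k.
Proof.
  unfold qbeta, qbinom.
  replace (n + k + 1)%nat with (S n + k)%nat by lia; simpl qfact.
  pose proof (qfact_gt0 r hr (n + k)); pose proof (qfact_gt0 r hr n);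
  pose proof (qfact_gt0 r hr k).
  pose proof (qint_gt0 r hr (S n) ltac:(lia)); pose proof (qint_gt0 r hr (S (n + k)) ltac:(lia)).
  field; repeat split; apply Rgt_not_eq; lra.
Qed.

End QBeta.

Section MKZMoments.
Variables (r : R) (n : nat) (x : R).
Hypothesis hr : 0 < r < 1.
Hypothesis hx : 0 <= x < 1.

Lemma mkz_series : is_series (mkz r n x) 1.
Proof.
  pose proof (qpoch_gt0 r hr x (S n) hx).
  replace 1 with (/ qpoch r x (S n) * qpoch r x (S n)) by (field; lra).
  apply (is_series_scal_r (qpoch r x (S n))), qbinomial_series; assumption.
Qed.

Lemma mkz_ge0 k : 0 <= mkz r n x k.
Proof.
  pose proof (qbinom_gt0 r hr n k); pose proof (qpoch_gt0 r hr x (S n) hx);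
  pose proof (pow_le x k ltac:(lra)).
  unfold mkz; apply Rmult_le_pos; [apply Rmult_le_pos|]; lra.
Qed.

Lemma mkz_succ_node k : mkz r n x (S k) * mkz_node r n (S k) = x * mkz r n x k.
Proof.
  unfold mkz, mkz_node; replace (n + S k)%nat with (S (n + k)) by lia.
  pose proof (qint_gt0 r hr (S (n + k)) ltac:(lia));
  pose proof (qint_gt0 r hr (S k) ltac:(lia)).
  replace (qbinom r n (S k)) with (qbinom r n k * qint r (S (n + k)) / qint r (S k))
    by (rewrite <- qbinom_succ_r by assumption; field; lra).
  simpl pow; field; lra.
Qed.

Lemma mkz_first_moment : is_series (fun k => mkz r n x k * mkz_node r n k) x.
Proof.
  apply is_series_of_succ; [rewrite mkz_node_0; ring|].
  eapply is_series_ext; [intros k; symmetry; apply mkz_succ_node|].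
  enough (H : is_series (fun k => x * mkz r n x k) (x * 1)) by now rewrite Rmult_1_r in H.
  apply (is_series_scal_l x (mkz r n x) 1), mkz_series.
Qed.

Lemma mkz_second_moment :
  is_series (fun k => mkz r n x k * mkz_node r n k * mkz_node r n (k - 1)) (x ^ 2).
Proof.
  apply is_series_of_succ; [rewrite mkz_node_0; ring|].
  apply is_series_of_succ; [simpl; rewrite mkz_node_0; ring|].
  apply (is_series_ext (fun k => x ^ 2 * mkz r n x k)).
  - intros k; replace (S (S k) - 1)%nat with (S k) by lia.
    rewrite mkz_succ_node, Rmult_assoc, mkz_succ_node; simpl; ring.
  - enough (H : is_series (fun k => x ^ 2 * mkz r n x k) (x ^ 2 * 1))
      by now rewrite Rmult_1_r in H.
    apply (is_series_scal_l (x ^ 2) (mkz r n x) 1), mkz_series.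
Qed.

End MKZMoments.

Section NodeBounds.
Variable r : R.
Hypothesis hr : 0 < r < 1.

Lemma mkz_node_unit m k : 0 <= mkz_node r m k <= 1.
Proof.
  destruct k as [|k]; [rewrite mkz_node_0; lra|].
  pose proof (qint_gt0 r hr (m + S k) ltac:(lia)) as Hden.
  pose proof (qint_le r hr (S k) (m + S k) ltac:(lia)); pose proof (qint_ge0 r hr (S k)).
  unfold mkz_node; split; [apply Rdiv_le_0_compat; lra|].
  apply (Rdiv_le_1 _ _ Hden); lra.
Qed.

Lemma mkz_node_step m a : (1 <= m)%nat ->
  0 <= mkz_node r m (S a) - mkz_node r m a <= / qint r m.
Proof.
  intros Hm; unfold mkz_node, qint.
  replace (m + S a)%nat with (S (m + a)) by lia; cbn [pow]; rewrite !pow_add.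
  assert (Hu : 0 < r ^ a <= 1) by (split; [apply pow_lt | apply pow_unit_interval]; lra).
  assert (Hv : 0 < r ^ m < 1).
  { pose proof (pow_lt_1_compat r m ltac:(lra) Hm); split; [apply pow_lt|]; lra. }
  set (u := r ^ a) in *; set (v := r ^ m) in *.
  assert (0 < 1 - u * v) by nra.
  assert (0 < 1 - r * (u * v)) by (assert (u * v < 1) by nra; nra).
  assert (0 < 1 - r * u) by nra.
  replace ((1 - r * u) / (1 - r) / ((1 - r * (v * u)) / (1 - r))
           - (1 - u) / (1 - r) / ((1 - v * u) / (1 - r)))
    with ((1 - r) * u * (1 - v) / ((1 - r * (u * v)) * (1 - u * v)))
    by (field; repeat split; apply Rgt_not_eq; nra).
  replace (/ ((1 - v) / (1 - r))) with ((1 - r) / (1 - v)) by (field; split; lra).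
  split.
  - apply Rdiv_le_0_compat; [apply Rmult_le_pos; [apply Rmult_le_pos|]|]; nra.
  - apply Rmult_le_reg_r with ((1 - r * (u * v)) * (1 - u * v) * (1 - v)).
    { apply Rmult_lt_0_compat; [apply Rmult_lt_0_compat|]; lra. }
    replace ((1 - r) * u * (1 - v) / ((1 - r * (u * v)) * (1 - u * v))
             * ((1 - r * (u * v)) * (1 - u * v) * (1 - v)))
      with ((1 - r) * (u * (1 - v) * (1 - v))) by (field; split; lra).
    replace ((1 - r) / (1 - v) * ((1 - r * (u * v)) * (1 - u * v) * (1 - v)))
      with ((1 - r) * ((1 - r * (u * v)) * (1 - u * v))) by (field; lra).
    apply Rmult_le_compat_l; [lra|].
    assert (u * (1 - v) <= 1 - r * (u * v)) by nra.
    assert (1 - v <= 1 - u * v) by nra.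
    apply Rmult_le_compat; nra.
Qed.

Lemma mkz_node_succ_order m k : (1 <= m)%nat ->
  0 <= mkz_node r m k - mkz_node r (S m) k <= / qint r m.
Proof.
  intros Hm; unfold mkz_node.
  set (A := qint r k); set (B := qint r (m + k)); set (C := qint r (S m + k)).
  assert (HA : 0 <= A) by apply qint_ge0, hr.
  assert (HAB : A <= B) by (apply qint_le; [assumption | lia]).
  assert (Hm0 : 0 < qint r m) by (apply qint_gt0; assumption).
  assert (HmB : qint r m <= B) by (apply qint_le; [assumption | lia]).
  assert (HC : C = B + r ^ (m + k)).
  { unfold C, B; replace (S m + k)%nat with (m + k + 1)%nat by lia.
    rewrite (qint_add r hr); unfold qint; simpl; field; lra. }
  pose proof (pow_unit_interval r (m + k) ltac:(lra)).
  assert (HBC : 0 < B * C) by (apply Rmult_lt_0_compat; lra).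
  replace (A / B - A / C) with (A * r ^ (m + k) / (B * C)) by (rewrite HC; field; lra).
  split; [apply Rdiv_le_0_compat; [apply Rmult_le_pos|]; lra|].
  apply Rmult_le_reg_r with (B * C * qint r m); [apply Rmult_lt_0_compat; lra|].
  replace (A * r ^ (m + k) / (B * C) * (B * C * qint r m))
    with (A * r ^ (m + k) * qint r m) by (field; lra).
  replace (/ qint r m * (B * C * qint r m)) with (B * C) by (field; lra).
  assert (A * r ^ (m + k) <= B) by nra.
  apply Rmult_le_compat; nra.
Qed.

End NodeBounds.

(* Core of [qbeta_variance_le], with [mu], [mu'] the mass ratios [qbeta_(k+1)/qbeta_k],
   [qbeta_(k+2)/qbeta_(k+1)] and [y], [y'] the MKZ nodes at [k], [k-1]: the right side then has
   an explicit MKZ average. *)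
Lemma quadratic_moment_le (P mu mu' y y' x i : R) :
  1 <= P -> 0 <= mu <= 1 -> 0 <= mu' - mu <= i -> Rabs (mu - y) <= i ->
  0 <= y <= 1 -> 0 <= y - y' <= i -> 0 <= x <= 1 ->
  P ^ 2 * mu * mu' - 2 * x * P * mu + x ^ 2 <=
  (P ^ 2 + 8) * i + 2 * (P - 1) ^ 2 + 4 * (y * y' - 2 * x * y + x ^ 2).
Proof.
  intros HP Hmu Hmu' Hmy Hy Hy' Hx.
  apply Rabs_le_between in Hmy.
  assert (Hspread : P ^ 2 * (mu * (mu' - mu)) <= P ^ 2 * i).
  { apply Rmult_le_compat_l; [nra|].
    rewrite <- (Rmult_1_l i); apply Rmult_le_compat; lra. }
  assert (Hscale : (mu * P - x) ^ 2 <= 2 * (P - 1) ^ 2 + 2 * (mu - x) ^ 2).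
  { assert (mu ^ 2 <= 1) by nra.
    assert (mu ^ 2 * (P - 1) ^ 2 <= 1 * (P - 1) ^ 2)
      by (apply Rmult_le_compat_r; [apply pow2_ge_0 | lra]).
    pose proof (pow2_ge_0 (mu * (P - 1) - (mu - x))); nra. }
  assert (Hshift : (mu - x) ^ 2 <= 2 * (mu - y) ^ 2 + 2 * (y - x) ^ 2).
  { pose proof (pow2_ge_0 ((mu - y) - (y - x))); nra. }
  assert (Hnear : (mu - y) ^ 2 <= i).
  { destruct (Rle_or_lt 0 (mu - y)); nra. }
  assert (Hlag : (y - x) ^ 2 <= (y * y' - 2 * x * y + x ^ 2) + i) by nra.
  nra.
Qed.

(** * Second-moment estimate for the q-MKZ-Durrmeyer operator *)

Definition mkz_durrmeyer (r P : R) (n : nat) (f : R -> R) (x : R) : R :=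
  Series (fun k => mkz r n x k / qbeta r n k *
                   Series (fun j => qbeta_weight r n k j * f (r ^ j * P))).

Definition qbeta_variance (r P x : R) (n k : nat) : R :=
  P ^ 2 * mkz_node r (S n) (S k) * mkz_node r (S n) (S (S k))
  - 2 * x * P * mkz_node r (S n) (S k) + x ^ 2.

Definition mkz_majorant (r x D : R) (n k : nat) : R :=
  D + 4 * (mkz_node r n k * mkz_node r n (k - 1) - 2 * x * mkz_node r n k + x ^ 2).

Section DeviationEstimate.
Variables (r P : R) (n : nat) (x : R).
Hypothesis hr : 0 < r < 1.
Hypothesis hP : 1 <= P.
Hypothesis hn : (1 <= n)%nat.
Hypothesis hx : 0 <= x < 1.

Lemma qbeta_second_moment k :
  is_series (fun j => qbeta_weight r n k j * (r ^ j * P - x) ^ 2)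
    (qbeta r n k * qbeta_variance r P x n k).
Proof.
  apply (is_series_ext (fun j => P ^ 2 * qbeta_weight r n (S (S k)) j
                                 + - (2 * x * P) * qbeta_weight r n (S k) j
                                 + x ^ 2 * qbeta_weight r n k j)).
  { intros j; rewrite !qbeta_weight_succ by assumption; simpl; ring. }
  replace (qbeta r n k * _) with (P ^ 2 * qbeta r n (S (S k)) + - (2 * x * P) * qbeta r n (S k)
                                  + x ^ 2 * qbeta r n k)
    by (unfold qbeta_variance; rewrite !qbeta_succ by assumption; ring).
  apply (@is_series_plus R_AbsRing R_NormedModule);
    [apply (@is_series_plus R_AbsRing R_NormedModule)|];
    apply (is_series_scal_l _ _ (qbeta r n _)), qbeta_series, hr.
Qed.

Lemma qbeta_variance_le k :
  qbeta_variance r P x n k <= mkz_majorant r x ((P ^ 2 + 8) * / qint r n + 2 * (P - 1) ^ 2) n k.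
Proof.
  assert (Hi : / qint r (S n) <= / qint r n).
  { pose proof (qint_gt0 r hr n hn); pose proof (qint_le r hr n (S n) ltac:(lia)).
    apply Rinv_le_contravar; assumption. }
  pose proof (mkz_node_step r hr (S n) k ltac:(lia)) as Hstep0.
  pose proof (mkz_node_step r hr (S n) (S k) ltac:(lia)) as Hstep1.
  pose proof (mkz_node_succ_order r hr n k hn) as Horder.
  apply quadratic_moment_le; try apply mkz_node_unit; try assumption; try lra.
  - apply Rabs_le; lra.
  - destruct k as [|k].
    + rewrite !mkz_node_0; pose proof (Rinv_0_lt_compat _ (qint_gt0 r hr n hn)); lra.
    + replace (S k - 1)%nat with k by lia; apply mkz_node_step; assumption.
Qed.

Lemma mkz_majorant_series D : is_series (fun k => mkz r n x k * mkz_majorant r x D n k) D.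
Proof.
  unfold mkz_majorant; set (m := mkz r n x); set (y := mkz_node r n).
  assert (Hsum : is_series (fun k => ((D + 4 * x ^ 2) * m k + 4 * (m k * y k * y (k - 1)%nat))
                                     + - (8 * x) * (m k * y k))
                           ((D + 4 * x ^ 2) * 1 + 4 * x ^ 2 + - (8 * x) * x)).
  { apply (@is_series_plus R_AbsRing R_NormedModule);
      [apply (@is_series_plus R_AbsRing R_NormedModule)|].
    - apply (is_series_scal_l _ _ 1), mkz_series; assumption.
    - apply (is_series_scal_l _ _ (x ^ 2)), mkz_second_moment; assumption.
    - apply (is_series_scal_l _ _ x), mkz_first_moment; assumption. }
  replace ((D + 4 * x ^ 2) * 1 + 4 * x ^ 2 + - (8 * x) * x) with D in Hsum by ring.
  revert Hsum; apply is_series_ext; intros k; simpl; ring.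
Qed.

Section Modulus.
Variables (f : R -> R) (eps K : R).
Hypothesis hK : 0 <= K.
Hypothesis hf : forall u, 0 <= u <= P -> Rabs (f u - f x) <= eps + K * (u - x) ^ 2.

Lemma mkz_durrmeyer_term_le k :
  Rabs (mkz r n x k / qbeta r n k * Series (fun j => qbeta_weight r n k j * f (r ^ j * P))
        - f x * mkz r n x k)
  <= mkz r n x k * (eps + K * mkz_majorant r x ((P ^ 2 + 8) * / qint r n + 2 * (P - 1) ^ 2) n k).
Proof.
  assert (Hnodes : forall j, 0 <= r ^ j * P <= P).
  { intros j; pose proof (pow_unit_interval r j ltac:(lra)); split; nra. }
  pose proof (Series_quadratic_deviation_le (qbeta_weight r n k) (fun j => r ^ j * P) f
    _ _ x eps K (qbeta_weight_ge0 r hr n k) (qbeta_series r hr n k) (qbeta_second_moment k)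
    (fun j => hf _ (Hnodes j))) as Hinner.
  pose proof (qbeta_variance_le k) as Hvar.
  pose proof (qbeta_gt0 r hr n k) as Hb; pose proof (mkz_ge0 r n x hr hx k) as Hm.
  set (m := mkz r n x k) in *; set (b := qbeta r n k) in *; set (I := Series _) in *.
  replace (m / b * I - f x * m) with (m / b * (I - f x * b)) by (field; lra).
  rewrite Rabs_mult, Rabs_right by (apply Rle_ge, Rdiv_le_0_compat; lra).
  apply Rle_trans with (m / b * (b * (eps + K * qbeta_variance r P x n k))).
  - apply Rmult_le_compat_l; [apply Rdiv_le_0_compat; lra | exact Hinner].
  - replace (m / b * (b * (eps + K * qbeta_variance r P x n k)))
      with (m * (eps + K * qbeta_variance r P x n k)) by (field; lra).
    apply Rmult_le_compat_l, Rplus_le_compat_l, Rmult_le_compat_l; assumption.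
Qed.

Theorem mkz_durrmeyer_deviation_le :
  Rabs (mkz_durrmeyer r P n f x - f x)
    <= eps + K * ((P ^ 2 + 8) * / qint r n + 2 * (P - 1) ^ 2).
Proof.
  set (D := (P ^ 2 + 8) * / qint r n + 2 * (P - 1) ^ 2).
  unfold mkz_durrmeyer; rewrite <- (Rmult_1_r (f x)).
  apply (Series_deviation_le (mkz r n x) (fun k => eps + K * mkz_majorant r x D n k)).
  - apply mkz_series; assumption.
  - assert (Hsum : is_series
               (fun k => eps * mkz r n x k + K * (mkz r n x k * mkz_majorant r x D n k))
               (eps * 1 + K * D)).
    { apply (@is_series_plus R_AbsRing R_NormedModule).
      - apply (is_series_scal_l _ _ 1), mkz_series; assumption.
      - apply (is_series_scal_l _ _ D), mkz_majorant_series. }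
    rewrite Rmult_1_r in Hsum; revert Hsum; apply is_series_ext; intros k; simpl; ring.
  - apply mkz_durrmeyer_term_le.
Qed.

End Modulus.

End DeviationEstimate.

(** * From two bases (p, q) to one base q/p *)

Fixpoint triangular (m : nat) : nat :=
  match m with O => O | S m' => (triangular m' + m')%nat end.

Lemma triangular_add a b : triangular (a + b) = (triangular a + triangular b + a * b)%nat.
Proof.
  induction b as [|b IH]; simpl; [rewrite Nat.add_0_r; lia|].
  rewrite Nat.add_succ_r; simpl; rewrite IH; lia.
Qed.

Lemma triangular_div2 m : (m * (m - 1) / 2)%nat = triangular m.
Proof.
  assert (Htwice : (m * (m - 1) = triangular m * 2)%nat).
  { induction m as [|m IH]; simpl triangular; [reflexivity|].
    destruct m; simpl in *; nia. }
  rewrite Htwice; apply Nat.div_mul; lia.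
Qed.

Section ScaledParameters.
Variables p r : R.
Hypothesis hp : 0 < p.
Hypothesis hr : 0 < r < 1.

Lemma pq_int_scaled m : pq_int p (r * p) m = p ^ m * qint r m / p.
Proof. unfold pq_int, qint; rewrite Rpow_mult_distr; field; split; nra. Qed.

Lemma pq_fact_scaled m : pq_fact p (r * p) m = p ^ triangular m * qfact r m.
Proof.
  induction m as [|m IH]; simpl; [ring|].
  rewrite IH, pq_int_scaled, pow_add; simpl pow; field; lra.
Qed.

Lemma pq_binom_scaled n k : pq_binom p (r * p) (n + k) k = p ^ (k * n) * qbinom r n k.
Proof.
  unfold pq_binom, qbinom; replace (n + k - k)%nat with n by lia.
  rewrite !pq_fact_scaled, triangular_add, !pow_add.
  pose proof (qfact_gt0 r hr n); pose proof (qfact_gt0 r hr k).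
  pose proof (pow_lt p (triangular n) hp); pose proof (pow_lt p (triangular k) hp).
  replace (n * k)%nat with (k * n)%nat by lia.
  field; repeat split; apply Rgt_not_eq; lra.
Qed.

Lemma pq_pow_scaled u m : pq_pow p (r * p) 1 (- u) m = p ^ triangular m * qpoch r u m.
Proof.
  induction m as [|m IH]; simpl; [ring|].
  rewrite IH, pow_add, Rpow_mult_distr; ring.
Qed.

Lemma m_nk_scaled n k x : m_nk p (r * p) n k x = mkz r n x k.
Proof.
  unfold m_nk, mkz.
  replace (n * (n + 1))%nat with (S n * (S n - 1))%nat by nia.
  rewrite triangular_div2, pq_binom_scaled, pq_pow_scaled.
  replace (n + 1)%nat with (S n) by lia; rewrite pow_add.
  pose proof (pow_lt p (k * n) hp); pose proof (pow_lt p (triangular (S n)) hp).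
  field; split; apply Rgt_not_eq; lra.
Qed.

Lemma b_nk_scaled n k u : (1 <= n)%nat ->
  b_nk p (r * p) n k u = p ^ k * p ^ k * qbinom r (S n) k * u ^ k * qpoch r u n.
Proof.
  intros Hn; unfold b_nk; rewrite triangular_div2.
  replace (Z.of_nat k * (Z.of_nat n - 1) + Z.of_nat (triangular n))%Z
    with (Z.of_nat (k * (n - 1) + triangular n))
    by (rewrite Nat2Z.inj_add, Nat2Z.inj_mul, Nat2Z.inj_sub by lia; simpl; lia).
  rewrite <- pow_powerRZ.
  replace (n + k + 1)%nat with (S n + k)%nat by lia.
  rewrite pq_binom_scaled, pq_pow_scaled.
  replace (k * S n)%nat with (k * (n - 1) + k + k)%nat by nia; rewrite !pow_add.
  pose proof (pow_lt p (k * (n - 1)) hp); pose proof (pow_lt p (triangular n) hp);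
  pose proof (pow_lt p k hp).
  field; split; apply Rgt_not_eq; lra.
Qed.

Lemma Mtilde_scaled n f x : (1 <= n)%nat -> x <> 1 ->
  Mtilde p (r * p) n f x = mkz_durrmeyer r (/ p) n f x.
Proof.
  intros Hn Hx; unfold Mtilde, mkz_durrmeyer.
  destruct (Req_EM_T x 1) as [E|_]; [contradiction|].
  rewrite pq_int_scaled, <- Series_scal_l; apply Series_ext; intros k.
  unfold pq_integral; rewrite m_nk_scaled.
  assert (Hterm : forall j,
      (r * p) ^ j / p ^ S j *
      (b_nk p (r * p) n k (r * p * ((r * p) ^ j / p ^ S j * 1)) * f ((r * p) ^ j / p ^ S j * 1))
      = (p ^ k * p ^ k * qbinom r (S n) k * r ^ k / p) * (qbeta_weight r n k j * f (r ^ j * / p))).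
  { intros j.
    assert (Hnode : (r * p) ^ j / p ^ S j * 1 = r ^ j * / p).
    { rewrite Rpow_mult_distr; simpl pow; pose proof (pow_lt p j hp); field; lra. }
    rewrite Hnode, b_nk_scaled by assumption.
    replace (r * p * (r ^ j * / p)) with (r ^ S j) by (simpl; field; lra).
    unfold qbeta_weight; rewrite <- !pow_mult.
    replace (S j * k)%nat with (k + j * k)%nat by lia.
    replace (S k * j)%nat with (j + j * k)%nat by lia.
    rewrite !pow_add, Rpow_mult_distr; simpl pow.
    pose proof (pow_lt p j hp); field; lra. }
  rewrite (Series_ext _ _ Hterm), Series_scal_l; unfold Rdiv; rewrite qbeta_inv by assumption.
  pose proof (pow_lt p k hp); pose proof (pow_lt r k ltac:(lra)); pose proof (pow_lt p n hp).
  rewrite !Rpow_mult_distr; replace (n + 1)%nat with (S n) by lia; simpl pow.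
  field; repeat split; apply Rgt_not_eq; lra.
Qed.

End ScaledParameters.

Lemma inv_qint_le_inv_pq_int (p r : R) (n : nat) :
  0 < p <= 1 -> 0 < r < 1 -> (1 <= n)%nat -> / qint r n <= / pq_int p (r * p) n.
Proof.
  intros Hp Hr Hn; rewrite pq_int_scaled by lra.
  pose proof (qint_gt0 r Hr n Hn).
  assert (Hpn : 0 < p ^ n <= p).
  { split; [apply pow_lt; lra|].
    destruct n as [|n]; [lia|]; simpl; pose proof (pow_unit_interval p n ltac:(lra)); nra. }
  apply Rinv_le_contravar; [apply Rdiv_lt_0_compat; [apply Rmult_lt_0_compat|]; lra|].
  apply (Rle_div_l _ _ p); nra.
Qed.

Lemma Mtilde_deviation_le (p q : R) (n : nat) (f : R -> R) (x eps K : R) :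
  0 < q < p -> 1 / 2 <= p <= 1 -> (1 <= n)%nat -> 0 <= x <= 1 -> 0 <= K ->
  (forall u, 0 <= u <= 2 -> Rabs (f u - f x) <= eps + K * (u - x) ^ 2) ->
  Rabs (Mtilde p q n f x - f x) <= eps + K * (12 / pq_int p q n + 2 * (/ p - 1) ^ 2).
Proof.
  intros Hq Hp Hn Hx HK Hf.
  set (r := q / p).
  assert (Hr : 0 < r < 1)
    by (unfold r; split; [apply Rdiv_lt_0_compat | apply (Rdiv_lt_1 q p)]; lra).
  replace q with (r * p) by (unfold r; field; lra).
  assert (HP : 1 <= / p <= 2).
  { split; [rewrite <- Rinv_1 | replace 2 with (/ (1 / 2)) by field];
      apply Rinv_le_contravar; lra. }
  assert (Hdev : ((/ p) ^ 2 + 8) * / qint r n <= 12 / pq_int p (r * p) n).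
  { pose proof (inv_qint_le_inv_pq_int p r n ltac:(lra) Hr Hn).
    pose proof (Rinv_0_lt_compat _ (qint_gt0 r Hr n Hn)).
    assert ((/ p) ^ 2 + 8 <= 12) by nra.
    apply Rle_trans with (12 * / qint r n); [apply Rmult_le_compat_r|]; lra. }
  assert (Hbound : 0 <= ((/ p) ^ 2 + 8) * / qint r n).
  { apply Rmult_le_pos; [nra | left; apply Rinv_0_lt_compat, qint_gt0; assumption]. }
  assert (Heps : 0 <= eps).
  { specialize (Hf x ltac:(lra)); rewrite !Rminus_diag, Rabs_R0 in Hf; simpl in Hf; lra. }
  destruct (Req_EM_T x 1) as [-> | Hx1].
  - unfold Mtilde; destruct (Req_EM_T 1 1) as [_ | []]; [|reflexivity].
    rewrite Rminus_diag, Rabs_R0; pose proof (pow2_ge_0 (/ p - 1)).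
    apply Rplus_le_le_0_compat, Rmult_le_pos; lra.
  - rewrite Mtilde_scaled by (lra || assumption).
    assert (Hfp : forall u, 0 <= u <= / p -> Rabs (f u - f x) <= eps + K * (u - x) ^ 2)
      by (intros u Hu; apply Hf; lra).
    eapply Rle_trans;
      [exact (mkz_durrmeyer_deviation_le r (/ p) n x Hr ltac:(lra) Hn ltac:(lra) f eps K HK Hfp)|].
    apply Rplus_le_compat_l, Rmult_le_compat_l; lra.
Qed.

Lemma error_term_lim (u p : nat -> R) :
  is_lim_seq u 0 -> is_lim_seq p 1 ->
  is_lim_seq (fun n => 12 * u n + 2 * (/ p n - 1) ^ 2) 0.
Proof.
  intros Hu Hp.
  assert (Hinv : is_lim_seq (fun n => / p n - 1) 0).
  { replace (Finite 0) with (Finite (/ 1 - 1)) by (f_equal; field).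
    apply is_lim_seq_minus'; [|apply is_lim_seq_const].
    apply (is_lim_seq_inv p 1 Hp); intros E; injection E; lra. }
  replace (Finite 0) with (Finite (12 * 0 + 2 * (0 * 0))) by (f_equal; ring).
  apply is_lim_seq_plus'.
  - apply is_lim_seq_mult'; [apply is_lim_seq_const | exact Hu].
  - apply is_lim_seq_mult'; [apply is_lim_seq_const|].
    apply (is_lim_seq_ext (fun n => (/ p n - 1) * (/ p n - 1))); [intros n; ring|].
    apply is_lim_seq_mult'; exact Hinv.
Qed.

Theorem theorem2 (p q : nat -> R) (a b : R)
  (hq : forall n, 0 < q n < 1)
  (hp : forall n, q n < p n <= 1)
  (hp1 : is_lim_seq p (Finite 1))
  (hq1 : is_lim_seq q (Finite 1))
  (ha : is_lim_seq (fun n => p n ^ n) (Finite a))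
  (hb : is_lim_seq (fun n => q n ^ n) (Finite b))
  (hn : is_lim_seq (fun n => / pq_int (p n) (q n) n) (Finite 0))
  (f : R -> R) (hf : forall t, continuous f t) :
  forall eps : R, 0 < eps ->
    exists N : nat, forall n : nat, (N <= n)%nat ->
      forall x : R, 0 <= x <= 1 ->
        Rabs (Mtilde (p n) (q n) n f x - f x) < eps.
Proof.
  intros eps Heps.
  destruct (continuous_quadratic_modulus f 0 2 (eps / 2) (fun t _ => hf t) ltac:(lra))
    as [K [HK Hmod]].
  assert (Hlim : is_lim_seq (fun n => K * (12 * / pq_int (p n) (q n) n + 2 * (/ p n - 1) ^ 2)) 0).
  { replace (Finite 0) with (Rbar_mult K 0) by (simpl; f_equal; ring).
    apply is_lim_seq_scal_l, error_term_lim; assumption. }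
  apply is_lim_seq_spec in Hlim, hp1.
  pose proof (Hlim (mkposreal (eps / 2) ltac:(lra))) as Hsmall.
  pose proof (hp1 (mkposreal (1 / 2) ltac:(lra))) as Hhalf.
  destruct (filter_and _ _ (filter_and _ _ Hsmall Hhalf) (ex_intro _ 1%nat (fun n Hn => Hn)))
    as [N HN].
  exists N; intros n Hn x Hx.
  destruct (HN n Hn) as [[Hs Hp] Hn1]; simpl in Hs, Hp; apply Rabs_lt_between in Hs, Hp.
  pose proof (hq n); pose proof (hp n).
  pose proof (Mtilde_deviation_le (p n) (q n) n f x (eps / 2) K ltac:(lra) ltac:(lra) Hn1 Hx HK
                (fun u Hu => Hmod u x Hu ltac:(lra))) as Hdev.
  unfold Rdiv in Hdev; lra.
Qed.
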